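(* Let $M$ be a system execution satisfying the Lazy Set axioms A0, A1, A2, and let $\Rightarrow$ be the relation defined in the context. For all events $X,Y$, if $X\Rightarrow Y$ then it is not the case that $Y<X$ (equivalently, $\mathrm{Begin}(X)<\mathrm{End}(Y)$).
   Context: A system execution $M$ consists of: a set of events, partitioned into low-level events (actions) and high-level events; unary predicates $\mathrm{Add},\mathrm{Rem},\mathrm{Cnt}$ on events; a partial order $<$ on events in which every event has finitely many predecessors (and Lamport's finiteness property: for every event $x$ there is a finite set $E$ with $x<y$ for all events $y\notin E$); functions $\mathrm{Begin},\mathrm{End}$ from events to actions with $\mathrm{Begin}(e)=\mathrm{End}(e)=e$ for actions $e$; functions $\chi$ (events $\to\{0,1,f\}$), $\mathrm{val}$ (events $\to\mathbb N$), $\gamma$ (events $\to$ events). For events $X,Y$, $X<Y$ iff $\mathrm{End}(X)<\mathrm{Begin}(Y)$. Notation: $\mathrm{Add}^p(a)$ abbreviates $\mathrm{Add}(a)\wedge\chi(a)=p$, similarly $\mathrm{Rem}^p,\mathrm{Cnt}^p$; $\mathrm{Op}^p(a)$ abbreviates $(\mathrm{Add}(a)\vee\mathrm{Rem}(a)\vee\mathrm{Cnt}(a))\wedge\chi(a)=p$ for $p\in\{0,1\}$. A0: $\mathrm{Add},\mathrm{Rem},\mathrm{Cnt}$ pairwise disjoint; $\mathrm{Add},\mathrm{Rem}$ events are actions, $\mathrm{Cnt}$ events are high-level; $\mathrm{Begin}(X),\mathrm{End}(X)$ are actions; for $\mathrm{Cnt}$ events $E$, $\mathrm{Begin}(E)<\mathrm{End}(E)$;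 $<$ restricted to actions is linear. A1: for every $A$ with $\mathrm{Op}^1(A)$: $\mathrm{Add}^0(\gamma(A))$, $\mathrm{val}(\gamma(A))=\mathrm{val}(A)$, $\gamma(A)<\mathrm{End}(A)$, and no $R$ has $\mathrm{Rem}^1(R)$, $\gamma(R)=\gamma(A)$, $\gamma(A)<R<A$. A2: if $\mathrm{Op}^0(B)$, $\mathrm{Add}^0(A)$, $A<B$, $\mathrm{val}(A)=\mathrm{val}(B)$, then some $R$ has $\mathrm{Rem}^1(R)$, $A=\gamma(R)$, $R<\mathrm{End}(B)$. The relation $\Rightarrow$ on events holds exactly in the following cases: (1) for every $\mathrm{Cnt}^1$ event $C$: $\gamma(C)\Rightarrow C$, and $C\Rightarrow R$ for every $R$ with $\mathrm{Rem}^1(R)$ and $\gamma(R)=\gamma(C)$; (2) $R\Rightarrow C$ whenever $\mathrm{Cnt}^0(C)$, $\mathrm{Rem}^1(R)$, $\mathrm{val}(R)=\mathrm{val}(C)$, not $C<R$, and $\gamma(R)<C$; (3) $C\Rightarrow A$ whenever $\mathrm{Cnt}^0(C)$, $\mathrm{Add}^0(A)$, $\mathrm{val}(C)=\mathrm{val}(A)$ and not $A<C$. *)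

From Stdlib Require Import List.
Import ListNotations.

Inductive chival : Type := c0 | c1 | cf.

Record SysExec : Type := {
  Ev : Type;
  action : Ev -> Prop;       (* low-level events; the others are high-level *)
  Add : Ev -> Prop;
  Rem : Ev -> Prop;
  Cnt : Ev -> Prop;
  lt : Ev -> Ev -> Prop;
  Begin : Ev -> Ev;
  End : Ev -> Ev;
  chi : Ev -> chival;
  val : Ev -> nat;
  gamma : Ev -> Ev
}.

Section LazySet.
Variable M : SysExec.
Local Notation E := (Ev M).
Local Notation "x <<< y" := (lt M x y) (at level 70).

Definition is_system_execution : Prop :=
  (forall x, ~ x <<< x) /\
  (forall x y z, x <<< y -> y <<< z -> x <<< z) /\
  (forall x, exists l : list E, forall y, y <<< x -> In y l) /\
  (forall x, exists l : list E, forall y, ~ In y l -> x <<< y) /\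
  (forall e, action M e -> Begin M e = e /\ End M e = e) /\
  (forall X Y, X <<< Y <-> End M X <<< Begin M Y).

Definition AddP (p : chival) (a : E) := Add M a /\ chi M a = p.
Definition RemP (p : chival) (a : E) := Rem M a /\ chi M a = p.
Definition CntP (p : chival) (a : E) := Cnt M a /\ chi M a = p.
Definition OpP (p : chival) (a : E) :=
  (Add M a \/ Rem M a \/ Cnt M a) /\ chi M a = p.

Definition A0 : Prop :=
  (forall e, ~ (Add M e /\ Rem M e)) /\
  (forall e, ~ (Add M e /\ Cnt M e)) /\
  (forall e, ~ (Rem M e /\ Cnt M e)) /\
  (forall e, Add M e -> action M e) /\
  (forall e, Rem M e -> action M e) /\
  (forall e, Cnt M e -> ~ action M e) /\
  (forall X, action M (Begin M X) /\ action M (End M X)) /\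
  (forall e, Cnt M e -> Begin M e <<< End M e) /\
  (forall a b, action M a -> action M b -> a = b \/ a <<< b \/ b <<< a).

Definition A1 : Prop :=
  forall A, OpP c1 A ->
    AddP c0 (gamma M A) /\
    val M (gamma M A) = val M A /\
    gamma M A <<< End M A /\
    ~ (exists R, RemP c1 R /\ gamma M R = gamma M A /\
                 gamma M A <<< R /\ R <<< A).

Definition A2 : Prop :=
  forall A B, OpP c0 B -> AddP c0 A -> A <<< B -> val M A = val M B ->
    exists R, RemP c1 R /\ A = gamma M R /\ R <<< End M B.

Inductive Arrow : E -> E -> Prop :=
  | arr_gamma_cnt : forall C, CntP c1 C -> Arrow (gamma M C) C
  | arr_cnt_rem : forall C R, CntP c1 C -> RemP c1 R ->
      gamma M R = gamma M C -> Arrow C R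
  | arr_rem_cnt : forall R C, CntP c0 C -> RemP c1 R ->
      val M R = val M C -> ~ (C <<< R) -> gamma M R <<< C -> Arrow R C
  | arr_cnt_add : forall C A, CntP c0 C -> AddP c0 A ->
      val M C = val M A -> ~ (A <<< C) -> Arrow C A.

End LazySet.


(* Only the clauses of [=>] coming from [Cnt^1] events need an argument; the
   other two carry [~ Y < X] among their defining conditions.  For [gamma C => C],
   A1 gives [gamma C < End C], which is incompatible with [End C < gamma C].  For
   [C => R], A1 applied to [R] gives [gamma C = gamma R < R], so [R < C] would
   be exactly the interposed remove that A1 forbids for [C]. *)

Section LazySetArrow.

Variable M : SysExec.
Hypothesis HM : is_system_execution M.
Hypothesis HA0 : A0 M.
Hypothesis HA1 : A1 M.

Local Notation "x <<< y" := (lt M x y) (at level 70).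

Lemma lt_irrefl (x : Ev M) : ~ x <<< x.
Proof. destruct HM as [Hirr _]; apply Hirr. Qed.

Lemma lt_trans (x y z : Ev M) : x <<< y -> y <<< z -> x <<< z.
Proof. destruct HM as [_ [Htr _]]; apply Htr. Qed.

Lemma lt_End_Begin (X Y : Ev M) : X <<< Y <-> End M X <<< Begin M Y.
Proof. destruct HM as [_ [_ [_ [_ [_ Hiff]]]]]; apply Hiff. Qed.

Lemma Begin_action (a : Ev M) : action M a -> Begin M a = a.
Proof. destruct HM as [_ [_ [_ [_ [Hact _]]]]]; apply Hact. Qed.

Lemma End_action (a : Ev M) : action M a -> End M a = a.
Proof. destruct HM as [_ [_ [_ [_ [Hact _]]]]]; apply Hact. Qed.

Lemma Add_action (a : Ev M) : Add M a -> action M a.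
Proof. destruct HA0 as [_ [_ [_ [Hadd _]]]]; apply Hadd. Qed.

Lemma Rem_action (a : Ev M) : Rem M a -> action M a.
Proof. destruct HA0 as [_ [_ [_ [_ [Hrem _]]]]]; apply Hrem. Qed.

Lemma lt_action_r (X a : Ev M) : action M a -> X <<< a -> End M X <<< a.
Proof.
  intros Ha HXa.
  apply lt_End_Begin in HXa.
  now rewrite (Begin_action a Ha) in HXa.
Qed.

Lemma not_lt_action_of_lt_End (X a : Ev M) :
  action M a -> a <<< End M X -> ~ X <<< a.
Proof.
  intros Ha HaX HXa.
  apply (lt_irrefl a).
  apply (lt_trans _ (End M X)); auto using lt_action_r.
Qed.

Lemma CntP_OpP (p : chival) (a : Ev M) : CntP M p a -> OpP M p a.
Proof. intros [HC Hp]; split; auto. Qed.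

Lemma RemP_OpP (p : chival) (a : Ev M) : RemP M p a -> OpP M p a.
Proof. intros [HR Hp]; split; auto. Qed.

Lemma OpP1_gamma_action (A : Ev M) : OpP M c1 A -> action M (gamma M A).
Proof.
  intros HA; destruct (HA1 A HA) as [[Hadd _] _].
  now apply Add_action.
Qed.

Lemma OpP1_gamma_lt_End (A : Ev M) : OpP M c1 A -> gamma M A <<< End M A.
Proof. intros HA; apply (HA1 A HA). Qed.

Lemma OpP1_not_lt_gamma (A : Ev M) : OpP M c1 A -> ~ A <<< gamma M A.
Proof.
  intros HA.
  apply not_lt_action_of_lt_End;
    auto using OpP1_gamma_action, OpP1_gamma_lt_End.
Qed.

Lemma RemP1_gamma_lt (R : Ev M) : RemP M c1 R -> gamma M R <<< R.
Proof.
  intros HR.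
  pose proof (OpP1_gamma_lt_End R (RemP_OpP c1 R HR)) as Hlt.
  now rewrite (End_action R (Rem_action R (proj1 HR))) in Hlt.
Qed.

Lemma OpP1_not_lt_RemP1_same_gamma (A R : Ev M) :
  OpP M c1 A -> RemP M c1 R -> gamma M R = gamma M A -> ~ R <<< A.
Proof.
  intros HA HR Hg HRA.
  destruct (HA1 A HA) as [_ [_ [_ Hno]]].
  apply Hno; exists R.
  rewrite <- Hg; auto using RemP1_gamma_lt.
Qed.

End LazySetArrow.

Theorem lemma3p6 (M : SysExec) :
  is_system_execution M -> A0 M -> A1 M -> A2 M ->
  forall X Y : Ev M, Arrow M X Y -> ~ lt M Y X.
Proof.
  intros HM HA0 HA1 _ X Y Harr.
  destruct Harr as [C HC | C R HC HR Hg | R C _ _ _ Hn _ | C A _ _ _ Hn].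
  - exact (OpP1_not_lt_gamma M HM HA0 HA1 C (CntP_OpP M c1 C HC)).
  - exact (OpP1_not_lt_RemP1_same_gamma M HM HA0 HA1 C R
             (CntP_OpP M c1 C HC) HR Hg).
  - exact Hn.
  - exact Hn.
Qed.
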